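(* For any locally-fixable problem on a dynamic graph $G=(V,E)$, if every node is valid just before the insertion or deletion of an edge $(u,v)$, then after the update a solution in which every node is valid can be obtained by changing the states of at most two nodes, and only the states of the endpoints $u$ and $v$ are changed.
   Context: A graph problem is specified by a set of states $S_v$ for each node $v$; each node picks a state $s(v)\in S_v$. It is locally-fixable if for each node $v$ there is a validity function $f_v$ deciding whether $v$ is valid, such that (i) the output of $f_v$ depends only on the states of $v$ and its neighbors, and (ii) for any assignment of states in which $v$ is invalid, one can change only the state of $v$ (keeping all neighbors' states fixed) so that $v$ becomes valid and no previously valid neighbor of $v$ becomes invalid. A solution is feasible iff all nodes are valid. *)

From mathcomp Require Import all_boot.
Set Implicit Arguments. Unset Strict Implicit. Unset Printing Implicit Defensive.

Section Defs.
Variable V : finType.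
Variable St : Type.

Definition sgraph (G : rel V) : Prop := symmetric G /\ irreflexive G.

Definition upd (s : V -> St) (v : V) (x : St) : V -> St :=
  fun w => if w == v then x else s w.

Definition admissible (S : V -> St -> Prop) (s : V -> St) : Prop :=
  forall w, S w (s w).

(* f G s v : validity of node v in graph G under assignment s.
   (i) locality: f_v depends only on v's neighbourhood and the states of v
       and its neighbours;
   (ii) fixability: an invalid node can be made valid by changing only its
       own state without invalidating any previously valid neighbour. *)
Definition locally_fixable (S : V -> St -> Prop)
    (f : rel V -> (V -> St) -> V -> bool) : Prop :=
  (forall (G G' : rel V) (s s' : V -> St) (v : V),
      sgraph G -> sgraph G' ->
      G v =1 G' v -> s v = s' v -> (forall w, G v w -> s w = s' w) ->
      f G s v = f G' s' v) /\
  (forall (G : rel V), sgraph G -> forall s, admissible S s ->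
     forall v, ~~ f G s v ->
     exists x, S v x /\ f G (upd s v x) v /\
       (forall w, G v w -> f G s w -> f G (upd s v x) w)).

Definition add_edge (G : rel V) (u v : V) : rel V :=
  fun x y => G x y || ((x == u) && (y == v)) || ((x == v) && (y == u)).

Definition del_edge (G : rel V) (u v : V) : rel V :=
  fun x y => G x y && ~~ (((x == u) && (y == v)) || ((x == v) && (y == u))).

(* after the update to G', a feasible solution is obtained from s by changing
   only the states of u and v (hence at most two nodes) *)
Definition fixable_at_endpoints (S : V -> St -> Prop)
    (f : rel V -> (V -> St) -> V -> bool) (G' : rel V) (s : V -> St) (u v : V) : Prop :=
  exists s' : V -> St, admissible S s' /\ (forall w, f G' s' w) /\
    (forall w, w != u -> w != v -> s' w = s w).

End Defs.

From mathcomp Require Import all_boot.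

(* Fix u, then v, in the updated graph.  Fixing a node never invalidates a
   valid node: its neighbours stay valid by fixability, everyone else by
   locality.  Before the fixes, every node other than u and v is still valid,
   since neither its neighbourhood nor any state changed. *)

Section LocallyFixable.

Context {V : finType} {St : Type} {S : V -> St -> Prop}.
Context {f : rel V -> (V -> St) -> V -> bool}.
Hypothesis lf : locally_fixable S f.

Lemma admissible_upd s a x :
  admissible S s -> S a x -> admissible S (upd s a x).
Proof. by move=> adm Sx w; rewrite /upd; case: eqP => [->|]. Qed.

Lemma valid_upd_far G s a x w : sgraph G ->
  w != a -> ~~ G a w -> f G (upd s a x) w = f G s w.
Proof.
move=> sG wa nGaw; apply: (proj1 lf) => //; first by rewrite /upd (negbTE wa).
move=> z Gwz; rewrite /upd; case: eqP => // za.
by move: Gwz; rewrite za (proj1 sG) (negbTE nGaw).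
Qed.

Lemma fix_node G s a : sgraph G -> admissible S s ->
  exists s1, [/\ admissible S s1, f G s1 a,
    forall w, w != a -> f G s w -> f G s1 w &
    forall w, w != a -> s1 w = s w].
Proof.
move=> sG adm; case fa: (f G s a); first by exists s.
have [x [Sx [fxa keep]]] := proj2 lf G sG s adm a (negbT fa).
exists (upd s a x); split=> //; first exact: admissible_upd.
  move=> w wa fw; case Gaw: (G a w); first exact: keep.
  by rewrite valid_upd_far ?Gaw.
by move=> w wa; rewrite /upd (negbTE wa).
Qed.

Lemma fixable_at_endpoints_local_change G G' u v s :
  sgraph G -> sgraph G' -> admissible S s -> (forall w, f G s w) ->
  (forall w, w != u -> w != v -> G w =1 G' w) ->
  fixable_at_endpoints S f G' s u v.
Proof.
move=> sG sG' adm valid sameG.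
have [s1 [adm1 fu1 keep1 eq1]] := fix_node _ _ u sG' adm.
have [s2 [adm2 fv2 keep2 eq2]] := fix_node _ _ v sG' adm1.
exists s2; split=> //; split=> [w|w wu wv]; last by rewrite eq2 // eq1.
have [->|wv] := eqVneq w v; first exact: fv2.
apply: keep2 => //; have [->|wu] := eqVneq w u; first exact: fu1.
by apply: keep1; rewrite // -(proj1 lf G G' s s w sG sG' (sameG w wu wv)).
Qed.

End LocallyFixable.

Section EdgeUpdates.

Variables (V : finType) (G : rel V) (u v : V).

Lemma sgraph_add_edge : sgraph G -> u != v -> sgraph (add_edge G u v).
Proof.
move=> [sym irr] uv; split=> [x y|x].
  rewrite /add_edge sym [(y == u) && _]andbC [(y == v) && _]andbC.
  by rewrite -orbA [(_ && _) || _]orbC orbA.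
rewrite /add_edge irr /=; have [->|_] := eqVneq x u; last by rewrite andbF.
by rewrite (negbTE uv).
Qed.

Lemma sgraph_del_edge : sgraph G -> sgraph (del_edge G u v).
Proof.
move=> [sym irr]; split=> [x y|x]; last by rewrite /del_edge irr.
by rewrite /del_edge sym [(y == u) && _]andbC [(y == v) && _]andbC orbC.
Qed.

Lemma add_edge_away w : w != u -> w != v -> G w =1 add_edge G u v w.
Proof. by move=> wu wv z; rewrite /add_edge (negbTE wu) (negbTE wv) !orbF. Qed.

Lemma del_edge_away w : w != u -> w != v -> G w =1 del_edge G u v w.
Proof. by move=> wu wv z; rewrite /del_edge (negbTE wu) (negbTE wv) andbT. Qed.

End EdgeUpdates.

Theorem lemma11 (V : finType) (St : Type) (S : V -> St -> Prop)
    (f : rel V -> (V -> St) -> V -> bool) :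
  locally_fixable S f ->
  forall (G : rel V), sgraph G ->
  forall (u v : V), u != v ->
  forall (s : V -> St), admissible S s -> (forall w, f G s w) ->
    (~~ G u v -> fixable_at_endpoints S f (add_edge G u v) s u v) /\
    (G u v -> fixable_at_endpoints S f (del_edge G u v) s u v).
Proof.
move=> lf G sG u v uv s adm valid.
split=> _; apply: (fixable_at_endpoints_local_change lf G) => //.
- exact: sgraph_add_edge.
- exact: add_edge_away.
- exact: sgraph_del_edge.
- exact: del_edge_away.
Qed.
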